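(* A bipartite graph $G$ contains a repairable maximum stable set if and only if $G$ contains a perfect matching $M$ such that every edge of $M$ has an endpoint of degree one in $G$.
   Context: A maximum stable set is a stable set of maximum cardinality. A stable set $S$ of $G=(V,E)$ is repairable if for every $v\in S$ there exists $u\in V\setminus S$ such that $(S\setminus\{v\})\cup\{u\}$ is a stable set. *)

From mathcomp Require Import all_boot.
Set Implicit Arguments. Unset Strict Implicit. Unset Printing Implicit Defensive.

Definition simple_graph (T : finType) (e : rel T) : Prop :=
  symmetric e /\ irreflexive e.

Definition bipartite (T : finType) (e : rel T) : Prop :=
  exists A : {set T}, forall x y, e x y -> (x \in A) != (y \in A).

Definition stable (T : finType) (e : rel T) (S : {set T}) : Prop :=
  forall x y, x \in S -> y \in S -> ~~ e x y.

Definition maximum_stable (T : finType) (e : rel T) (S : {set T}) : Prop :=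
  stable e S /\ forall S' : {set T}, stable e S' -> #|S'| <= #|S|.

Definition repairable (T : finType) (e : rel T) (S : {set T}) : Prop :=
  stable e S /\
  forall v, v \in S -> exists2 u, u \notin S & stable e (u |: (S :\ v)).

Definition degree (T : finType) (e : rel T) (x : T) : nat := #|[set y | e x y]|.

Definition is_edge (T : finType) (e : rel T) (m : {set T}) : Prop :=
  exists x y, e x y /\ m = [set x; y].

Definition perfect_matching (T : finType) (e : rel T) (M : {set {set T}}) : Prop :=
  (forall m, m \in M -> is_edge e m) /\
  (forall x : T, #|[set m in M | x \in m]| = 1).

From mathcomp Require Import all_boot.

Set Implicit Arguments. Unset Strict Implicit. Unset Printing Implicit Defensive.

(* (=>) The vertex u repairing v in a maximum stable set S must be adjacent
   to v (otherwise u |: S would be a larger stable set) and to no other vertex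
   of S.  So v |-> u is injective, and since bipartiteness forces
   |V \ S| <= |S| it is a bijection onto V \ S; the pairs {v, u} form a
   perfect matching in which every v in S is a leaf.
   (<=) Given such a matching M, choose one leaf in every edge.  A stable set
   meets each edge of M at most once, so the |M| chosen leaves form a maximum
   stable set, and a chosen leaf v is repaired by its partner, whose only
   neighbour among the chosen leaves is v. *)

Section Graph.
Variables (T : finType) (e : rel T).
Hypotheses (e_sym : symmetric e) (e_irr : irreflexive e).

Lemma stableS (A B : {set T}) : A \subset B -> stable e B -> stable e A.
Proof. by move=> /subsetP sAB stB x y /sAB xB /sAB; apply: stB. Qed.

Lemma stableU1 (u : T) (S : {set T}) :
  stable e (u |: S) <-> stable e S /\ {in S, forall w, ~~ e u w}.
Proof.
split=> [st | [stS uS] x y].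
  split; first by apply: stableS st; apply: subsetUr.
  by move=> w wS; apply: st; rewrite !inE ?eqxx ?wS ?orbT.
rewrite !inE => /predU1P[-> | xS] /predU1P[-> | yS].
- by rewrite e_irr.
- exact: uS.
- by rewrite e_sym; apply: uS.
- exact: stS.
Qed.

Lemma degree1_adj_eq (x y z : T) : degree e x = 1 -> e x y -> e x z -> y = z.
Proof.
rewrite /degree => /eqP/cards1P[c Nx] exy exz.
have /set1P-> : y \in [set c] by rewrite -Nx inE.
by have /set1P-> : z \in [set c] by rewrite -Nx inE.
Qed.

Section MaximumStable.
Variable S : {set T}.
Hypothesis Smax : maximum_stable e S.

Lemma maximum_stable_repair (v u : T) : u \notin S -> stable e (u |: S :\ v) ->
  e v u /\ {in S, forall w, e u w -> w = v}.
Proof.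
case: Smax => stS maxS uS /stableU1[_ uSv].
have excl : {in S, forall w, e u w -> w = v}.
  move=> w wS; apply: contraTeq => wv; apply: uSv; by rewrite !inE wv.
split=> //; apply: contraT => nevu.
have : stable e (u |: S).
  apply/stableU1; split=> // w wS; apply: contra nevu => euw.
  by rewrite -(excl w wS euw) e_sym.
by move/maxS; rewrite cardsU1 uS add1n ltnn.
Qed.

Lemma bipartite_maximum_stable_cardC : bipartite e -> #|~: S| <= #|S|.
Proof.
case=> A crossA; case: Smax => _ maxS.
have stA : stable e A.
  by move=> x y xA yA; apply/negP => /crossA; rewrite xA yA.
have stAc : stable e (~: A).
  move=> x y; rewrite !inE => /negbTE xA /negbTE yA.
  by apply/negP => /crossA; rewrite xA yA.
by rewrite -(leq_add2l #|S|) cardsC -(cardsC A) leq_add ?maxS.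
Qed.

End MaximumStable.

Section RepairMap.
Variables (S : {set T}) (f : T -> T).
Hypotheses (stS : stable e S) (f_adj : {in S, forall v, e v (f v)})
  (f_out : {in S, forall v, f v \notin S})
  (f_excl : {in S &, forall v w, e (f v) w -> w = v}).

Lemma repair_map_inj : {in S &, injective f}.
Proof. by move=> v w vS wS fvw; apply: (f_excl wS vS); rewrite -fvw e_sym f_adj. Qed.

Lemma repair_map_onto : #|~: S| <= #|S| -> f @: S = ~: S.
Proof.
move=> cardC; apply/eqP; rewrite eqEcard card_in_imset ?cardC ?andbT; last first.
  exact: repair_map_inj.
by apply/subsetP => _ /imsetP[v vS ->]; rewrite inE; apply: f_out.
Qed.

Hypothesis f_onto : f @: S = ~: S.

Lemma repair_map_preim (y : T) : y \notin S -> exists2 w, w \in S & y = f w.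
Proof. by move=> yS; apply/imsetP; rewrite f_onto inE. Qed.

Lemma repair_map_degree (v : T) : v \in S -> degree e v = 1.
Proof.
move=> vS; apply/eqP/cards1P; exists (f v); apply/setP => y; rewrite !inE.
apply/idP/eqP => [evy | ->]; last exact: f_adj.
have yS : y \notin S by apply: contraL evy => yS; apply: stS.
have [w wS Ey] := repair_map_preim yS.
by rewrite Ey (f_excl wS vS) // e_sym -Ey.
Qed.

Lemma repair_map_matching : perfect_matching e [set [set v; f v] | v in S].
Proof.
have pairS w x : w \in S -> x \in [set w; f w] -> x \in S -> x = w.
  by move=> wS /set2P[// | ->]; rewrite (negbTE (f_out wS)).
have pairC w x : w \in S -> x \in [set w; f w] -> x \notin S -> x = f w.
  by move=> wS /set2P[-> | //]; rewrite wS.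
split=> [_ /imsetP[v vS ->] | x]; first by exists v, (f v); split; first exact: f_adj.
have [w wS xw] : exists2 w, w \in S & x \in [set w; f w].
  case: (boolP (x \in S)) => [xS | /repair_map_preim[w wS ->]].
    by exists x; rewrite ?set21.
  by exists w; rewrite ?set22.
apply/eqP/cards1P; exists [set w; f w]; apply/setP => m; rewrite !inE.
apply/andP/eqP => [[/imsetP[w' w'S ->] xw'] | ->]; last by split; first exact: imset_f.
suff -> : w' = w by [].
case: (boolP (x \in S)) => xS; first by rewrite -(pairS w' x) // (pairS w x).
by apply: repair_map_inj; rewrite // -(pairC w' x) // (pairC w x).
Qed.

End RepairMap.

Lemma repairable_maximum_stable_map (S : {set T}) :
  maximum_stable e S -> repairable e S ->
  exists f : T -> T, [/\ {in S, forall v, e v (f v)},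
    {in S, forall v, f v \notin S} & {in S &, forall v w, e (f v) w -> w = v}].
Proof.
move=> Smax [_ rep].
have repair v : exists u, v \in S ->
    [/\ u \notin S, e v u & {in S, forall w, e u w -> w = v}].
  case: (boolP (v \in S)) => [vS | _]; last by exists v.
  have [u uS stu] := rep v vS; exists u => _.
  by case: (maximum_stable_repair Smax uS stu).
have [f fP] := fin_all_exists repair.
exists f; split=> [v /fP[] | v /fP[] | v w /fP[_ _ excl]] //.
exact: excl.
Qed.

Lemma max_repairable_leaf_matching (S : {set T}) :
  bipartite e -> maximum_stable e S -> repairable e S ->
  exists M : {set {set T}}, perfect_matching e M /\
    forall m, m \in M -> exists2 x, x \in m & degree e x = 1.
Proof.
move=> bip Smax Srep; have [stS _] := Smax.
have [f [f_adj f_out f_excl]] := repairable_maximum_stable_map Smax Srep.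
have f_onto := repair_map_onto f_adj f_out f_excl
  (bipartite_maximum_stable_cardC Smax bip).
exists [set [set v; f v] | v in S]; split; first exact: repair_map_matching.
move=> _ /imsetP[v vS ->]; exists v; first exact: set21.
exact: repair_map_degree f_excl f_onto v vS.
Qed.

Section LeafMatching.
Variable M : {set {set T}}.
Hypothesis Mperfect : perfect_matching e M.

Definition edge_of (x : T) : {set T} := odflt set0 [pick m in M | x \in m].

Lemma edge_of_set1 (x : T) : [set m in M | x \in m] = [set edge_of x].
Proof.
case: Mperfect => _ /(_ x)/eqP/cards1P[c Ex]; rewrite Ex /edge_of.
case: pickP => [m mx | none] /=.
  have : m \in [set m in M | x \in m] by rewrite inE.
  by rewrite Ex => /set1P->.
by have := set11 c; rewrite -Ex inE none.
Qed.

Lemma edge_of_in (x : T) : edge_of x \in M.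
Proof. by have := set11 (edge_of x); rewrite -edge_of_set1 inE => /andP[]. Qed.

Lemma mem_edge_of (x : T) : x \in edge_of x.
Proof. by have := set11 (edge_of x); rewrite -edge_of_set1 inE => /andP[]. Qed.

Lemma edge_ofE (x : T) (m : {set T}) : m \in M -> x \in m -> edge_of x = m.
Proof. by move=> mM xm; apply/esym/set1P; rewrite -edge_of_set1 inE mM. Qed.

Lemma edge_of_pair (x : T) : exists2 p, e x p & edge_of x = [set x; p].
Proof.
case: Mperfect => Medge _; have [a [b [eab Eab]]] := Medge _ (edge_of_in x).
have := mem_edge_of x; rewrite Eab => /set2P[-> | ->]; first by exists b.
by exists a; [rewrite e_sym | rewrite setUC].
Qed.

Lemma stable_card_le_matching (A : {set T}) : stable e A -> #|A| <= #|M|.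
Proof.
move=> stA; have inj : {in A &, injective edge_of}.
  move=> x y xA yA Exy; have [p exp Ex] := edge_of_pair x.
  have := mem_edge_of y; rewrite -Exy Ex => /set2P[-> // | yp].
  by have := stA x y xA yA; rewrite yp exp.
rewrite -(card_in_imset inj); apply/subset_leq_card/subsetP.
by move=> _ /imsetP[x _ ->]; apply: edge_of_in.
Qed.

Lemma leaf_edge_of (x y : T) : degree e x = 1 -> e x y -> edge_of y = edge_of x.
Proof.
move=> x1 exy; have [p exp Ex] := edge_of_pair x.
apply: edge_ofE; first exact: edge_of_in.
by rewrite Ex (degree1_adj_eq x1 exy exp) set22.
Qed.

Definition leaf_of (m : {set T}) : option T := [pick x in m | degree e x == 1].

Definition leaf_set : {set T} := [set x | leaf_of (edge_of x) == Some x].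

Lemma leaf_set_degree (x : T) : x \in leaf_set -> degree e x = 1.
Proof. by rewrite inE /leaf_of; case: pickP => [y /andP[_ /eqP y1] /eqP[<-] | _]. Qed.

Lemma leaf_set_stable : stable e leaf_set.
Proof.
move=> x y xS yS; apply/negP => exy.
move: yS; rewrite inE (leaf_edge_of (leaf_set_degree xS) exy).
move: xS; rewrite inE => /eqP-> /eqP[xy].
by rewrite xy e_irr in exy.
Qed.

Lemma leaf_set_repairable : repairable e leaf_set.
Proof.
split=> [|v vS]; first exact: leaf_set_stable.
have [p evp Ev] := edge_of_pair v.
have pv : edge_of p = edge_of v by apply: edge_ofE; rewrite ?edge_of_in // Ev set22.
exists p; first by apply: contraL evp => pS; apply: leaf_set_stable.
apply/stableU1; split; first by apply: stableS leaf_set_stable; apply: subsetDl.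
move=> y /setD1P[yv yS]; apply/negP => epy; case/eqP: yv.
have y1 := leaf_set_degree yS; rewrite e_sym in epy.
by move: yS vS; rewrite !inE -(leaf_edge_of y1 epy) pv => /eqP-> /eqP[].
Qed.

Hypothesis Mleaf : forall m, m \in M -> exists2 x, x \in m & degree e x = 1.

Lemma leaf_ofP (m : {set T}) : m \in M -> exists2 y, leaf_of m = Some y & y \in m.
Proof.
move=> mM; rewrite /leaf_of; case: pickP => [y /andP[ym _] | none]; first by exists y.
by have [x xm x1] := Mleaf mM; have := none x; rewrite /= xm x1 eqxx.
Qed.

Lemma leaf_set_cover : M \subset edge_of @: leaf_set.
Proof.
apply/subsetP => m mM; have [y ly ym] := leaf_ofP mM.
by apply/imsetP; exists y; rewrite ?inE (edge_ofE mM ym) ?ly.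
Qed.

Lemma leaf_set_maximum : maximum_stable e leaf_set.
Proof.
split=> [|A stA]; first exact: leaf_set_stable.
apply: leq_trans (stable_card_le_matching stA) _.
exact: leq_trans (subset_leq_card leaf_set_cover) (leq_imset_card _ _).
Qed.

End LeafMatching.

End Graph.

Theorem lemma3 (T : finType) (e : rel T) :
  simple_graph e -> bipartite e ->
  (exists S : {set T}, maximum_stable e S /\ repairable e S) <->
  (exists M : {set {set T}}, perfect_matching e M /\
     forall m, m \in M -> exists2 x, x \in m & degree e x = 1).
Proof.
move=> [e_sym e_irr] bip; split=> [[S [Smax Srep]] | [M [Mp Ml]]].
  exact: max_repairable_leaf_matching bip Smax Srep.
by exists (leaf_set e M); split; [apply: leaf_set_maximum | apply: leaf_set_repairable].
Qed.
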